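(* Let $d\ge1$ and let $\Lambda_1,\dots,\Lambda_d\subset\mathbb{N}$ be arbitrary infinite lacunary sets. Then there exists a function $\psi=(\psi_i)_{1\le i\le d}\in H^2(\mathbb{D},\mathbb{C}^d)$, cyclic for $S^*$, such that $\sigma(\psi_i)=\Lambda_i$ for $1\le i\le d$.
   Context: $H^2(\mathbb{D},\mathbb{C}^d)=H^2\oplus\dots\oplus H^2$ with coordinate functions $\psi_i\in H^2$; $S^*$ acts coordinatewise as the scalar backward shift; $\psi$ is cyclic if the closed span of $\{S^{*n}\psi:n\ge0\}$ is all of $H^2(\mathbb{D},\mathbb{C}^d)$. $\sigma(g)=\{k:\hat g(k)\ne0\}$. A set $\{n_1<n_2<\dots\}$ is lacunary if $n_{k+1}/n_k\ge c>1$ for all $k$. *)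

From Stdlib Require Import Reals Lra.
Open Scope R_scope.

Record Cx := mkC { re : R; im : R }.
Definition C0 : Cx := mkC 0 0.
Definition Cadd (z w : Cx) : Cx := mkC (re z + re w) (im z + im w).
Definition Csub (z w : Cx) : Cx := mkC (re z - re w) (im z - im w).
Definition Cmul (z w : Cx) : Cx :=
  mkC (re z * re w - im z * im w) (re z * im w + im z * re w).
Definition Cnorm2 (z : Cx) : R := re z * re z + im z * im z.

Fixpoint rsum (n : nat) (f : nat -> R) : R :=
  match n with O => 0 | S m => rsum m f + f m end.
Fixpoint csum (n : nat) (f : nat -> Cx) : Cx :=
  match n with O => C0 | S m => Cadd (csum m f) (f m) end.

(* A scalar H^2 function is identified with its sequence of Taylor
   coefficients g = (\hat g(k))_k; it lies in H^2 iff this is square summable. *)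
Definition inH2 (g : nat -> Cx) : Prop :=
  exists M : R, forall N : nat, rsum N (fun k => Cnorm2 (g k)) <= M.

(* An element of H^2(D, C^d): psi i = coefficient sequence of coordinate i,
   for i < d (values for i >= d are irrelevant). *)
Definition inH2d (d : nat) (psi : nat -> nat -> Cx) : Prop :=
  forall i, (i < d)%nat -> inH2 (psi i).

Definition bshift (psi : nat -> nat -> Cx) : nat -> nat -> Cx :=
  fun i k => psi i (S k).
Definition bshift_pow (n : nat) (psi : nat -> nat -> Cx) : nat -> nat -> Cx :=
  fun i k => psi i (k + n)%nat.

Definition distH2d_sq_le (d : nat) (phi chi : nat -> nat -> Cx) (eps : R) : Prop :=
  forall N : nat,
    rsum d (fun i => rsum N (fun k => Cnorm2 (Csub (phi i k) (chi i k)))) <= eps.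

Definition cyclic_bshift (d : nat) (psi : nat -> nat -> Cx) : Prop :=
  forall phi : nat -> nat -> Cx, inH2d d phi ->
  forall eps : R, 0 < eps ->
  exists (m : nat) (c : nat -> Cx),
    distH2d_sq_le d phi
      (fun i k => csum m (fun n => Cmul (c n) (bshift_pow n psi i k))) eps.

Definition spectrum (g : nat -> Cx) : nat -> Prop := fun k => g k <> C0.

(* Lambda is an infinite lacunary set: Lambda = {n_0 < n_1 < ...} with
   n_{j+1} / n_j >= c > 1 for all j (written multiplicatively). *)
Definition infinite_lacunary (Lam : nat -> Prop) : Prop :=
  exists n : nat -> nat,
    (forall j, (n j < n (S j))%nat) /\
    (forall k, Lam k <-> exists j, n j = k) /\
    exists c : R, 1 < c /\ forall j, c * INR (n j) <= INR (n (S j)).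

From Stdlib Require Import Reals Lra Lia ClassicalEpsilon.
Open Scope R_scope.

(** Cyclicity is reduced to a density criterion: [psi] is cyclic as
   soon as every unit vector [e_(i,k)] (coefficient 1 in degree [k] of
   coordinate [i]) is a limit of linear combinations of the [S^{*n} psi].
   Indeed, any [phi] in H^2(D, C^d) is, up to a small high-degree tail, a
   finite combination of unit vectors.

   The vector [psi] is then built from a very sparse sequence of "leaders"
   [leader t], taken in [Lam (t mod d)], each more than twice the previous
   one: [psi] has coefficient [2^-p] at the leaders [p] of coordinate [i],
   [2^-2p] at the other points of [Lam i], and [0] elsewhere, so its spectrum
   is exactly [Lam i].  Shifting by [leader t - k] moves the [t]-th leader to
   degree [k], and after rescaling by [2^(leader t)] all other coefficients
   are of size [O(2^-t)]; hence [e_(t mod d, k)] is in the closure of the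
   span. *)

Definition geo (n : nat) : R := (/2) ^ n.

Lemma geo_pos n : 0 < geo n.
Proof. unfold geo; apply pow_lt; lra. Qed.

Lemma geo_add a b : geo (a + b) = geo a * geo b.
Proof. unfold geo; apply pow_add. Qed.

Lemma geo_le1 n : geo n <= 1.
Proof.
  induction n as [|n IH]; unfold geo in *; simpl; [lra|].
  assert (0 < (/2) ^ n) by (apply pow_lt; lra). nra.
Qed.

Lemma geo_anti a b : (b <= a)%nat -> geo a <= geo b.
Proof.
  intros Hba. replace a with (b + (a - b))%nat by lia. rewrite geo_add.
  pose proof (geo_pos b); pose proof (geo_le1 (a - b)). nra.
Qed.

Lemma rsum_geo n : rsum n geo <= 2.
Proof.
  assert (E : rsum n geo = 2 - 2 * geo n).
  { induction n as [|n IH]; simpl rsum; [unfold geo; simpl; lra|].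
    rewrite IH; unfold geo; simpl; lra. }
  rewrite E; pose proof (geo_pos n); lra.
Qed.

Lemma geo_small eta : 0 < eta -> exists T, forall t, (T <= t)%nat -> geo t <= eta.
Proof.
  intros Heta.
  destruct (pow_lt_1_zero (/2) ltac:(rewrite Rabs_pos_eq; lra) eta Heta) as [T HT].
  exists T; intros t Ht. specialize (HT t Ht).
  rewrite Rabs_pos_eq in HT; [unfold geo; lra|]. apply pow_le; lra.
Qed.

Lemma rsum_le n f g : (forall j, (j < n)%nat -> f j <= g j) -> rsum n f <= rsum n g.
Proof.
  induction n as [|n IH]; simpl; intros H; [lra|].
  pose proof (H n ltac:(lia)). assert (rsum n f <= rsum n g) by (apply IH; auto). lra.
Qed.

Lemma rsum_ext n f g : (forall j, (j < n)%nat -> f j = g j) -> rsum n f = rsum n g.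
Proof. induction n as [|n IH]; simpl; intros H; [lra|]. rewrite (H n), IH; auto. Qed.

Lemma rsum_plus n f g : rsum n (fun j => f j + g j) = rsum n f + rsum n g.
Proof. induction n as [|n IH]; simpl; [lra|]. rewrite IH; lra. Qed.

Lemma rsum_minus n f g : rsum n (fun j => f j - g j) = rsum n f - rsum n g.
Proof. induction n as [|n IH]; simpl; [lra|]. rewrite IH; lra. Qed.

Lemma rsum_scal n c f : rsum n (fun j => c * f j) = c * rsum n f.
Proof. induction n as [|n IH]; simpl; [lra|]. rewrite IH; lra. Qed.

Lemma rsum_const n c : rsum n (fun _ => c) = INR n * c.
Proof. induction n as [|n IH]; simpl rsum; [simpl; lra|]. rewrite IH, S_INR; lra. Qed.

Lemma rsum_nonneg n f : (forall j, (j < n)%nat -> 0 <= f j) -> 0 <= rsum n f.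
Proof.
  intros H. apply Rle_trans with (rsum n (fun _ => 0)); [|apply rsum_le; auto].
  rewrite rsum_const; lra.
Qed.

Lemma rsum_len_mono m n f : (forall k, 0 <= f k) -> (m <= n)%nat -> rsum m f <= rsum n f.
Proof.
  intros Hf Hmn. induction Hmn as [|n _ IH]; [lra|]. simpl. pose proof (Hf n); lra.
Qed.

Lemma rsum_swap n m (f : nat -> nat -> R) :
  rsum n (fun i => rsum m (fun j => f i j)) = rsum m (fun j => rsum n (fun i => f i j)).
Proof.
  induction n as [|n IH]; simpl.
  - rewrite rsum_const; lra.
  - rewrite IH, <- rsum_plus. reflexivity.
Qed.

Lemma rsum_tail N0 N f : (forall k, 0 <= f k) ->
  rsum N (fun q => if (q <? N0)%nat then 0 else f q) <= rsum (N0 + N) f - rsum N0 f.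
Proof.
  intros Hf. set (g := fun q => if (q <? N0)%nat then 0 else f q).
  assert (Hg : forall k, 0 <= g k) by (intros k; unfold g; destruct (k <? N0)%nat; auto; lra).
  assert (Hshift : forall j, rsum (N0 + j) g = rsum (N0 + j) f - rsum N0 f).
  { induction j as [|j IH].
    - rewrite Nat.add_0_r.
      replace (rsum N0 g) with (rsum N0 (fun _ => 0)); [rewrite rsum_const; lra|].
      apply rsum_ext; intros k Hk; unfold g. destruct (Nat.ltb_spec k N0); [auto|lia].
    - rewrite Nat.add_succ_r; simpl. rewrite IH. unfold g at 1.
      destruct (Nat.ltb_spec (N0 + j) N0); [lia|lra]. }
  rewrite <- Hshift. apply rsum_len_mono; [auto|lia].
Qed.

Lemma rsum_bounded n (f : nat -> nat -> R) :
  (forall i, (i < n)%nat -> exists M, forall N, f i N <= M) ->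
  exists B, forall N, rsum n (fun i => f i N) <= B.
Proof.
  induction n as [|n IH]; intros H.
  - exists 0; intros; simpl; lra.
  - destruct IH as [B HB]; [intros; apply H; lia|].
    destruct (H n ltac:(lia)) as [M HM].
    exists (B + M); intros N; simpl. specialize (HB N); specialize (HM N); lra.
Qed.

Definition Cone : Cx := mkC 1 0.

Ltac cx_ring :=
  repeat match goal with z : Cx |- _ => destruct z end;
  unfold Cmul, Cadd, Csub, C0, Cone; simpl; f_equal; ring.

Lemma Cnorm2_nonneg z : 0 <= Cnorm2 z.
Proof. unfold Cnorm2; nra. Qed.

Lemma Cnorm2_C0 : Cnorm2 C0 = 0.
Proof. unfold Cnorm2, C0; simpl; ring. Qed.

Lemma Cnorm2_real x : Cnorm2 (mkC x 0) = x * x.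
Proof. unfold Cnorm2; simpl; ring. Qed.

Lemma Cnorm2_opp z : Cnorm2 (Csub C0 z) = Cnorm2 z.
Proof. destruct z; unfold Cnorm2, Csub, C0; simpl; ring. Qed.

Lemma Cnorm2_mul a b : Cnorm2 (Cmul a b) = Cnorm2 a * Cnorm2 b.
Proof. destruct a, b; unfold Cnorm2, Cmul; simpl; ring. Qed.

Lemma Cnorm2_add a b : Cnorm2 (Cadd a b) <= 2 * Cnorm2 a + 2 * Cnorm2 b.
Proof.
  destruct a as [a1 a2], b as [b1 b2]; unfold Cnorm2, Cadd; simpl.
  pose proof (Rle_0_sqr (a1 - b1)); pose proof (Rle_0_sqr (a2 - b2)); unfold Rsqr in *; nra.
Qed.

Lemma Cmul_C0_l x : Cmul C0 x = C0.
Proof. cx_ring. Qed.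
Lemma Cmul_C0_r x : Cmul x C0 = C0.
Proof. cx_ring. Qed.
Lemma Cmul_C1_l x : Cmul Cone x = x.
Proof. cx_ring. Qed.
Lemma Cmul_C1_r x : Cmul x Cone = x.
Proof. cx_ring. Qed.
Lemma Cadd_C0_l x : Cadd C0 x = x.
Proof. cx_ring. Qed.
Lemma Cadd_C0_r x : Cadd x C0 = x.
Proof. cx_ring. Qed.
Lemma Cmul_assoc a b c : Cmul a (Cmul b c) = Cmul (Cmul a b) c.
Proof. cx_ring. Qed.
Lemma Cmul_addl a b c : Cmul (Cadd a b) c = Cadd (Cmul a c) (Cmul b c).
Proof. cx_ring. Qed.
Lemma Cmul_subr a b c : Cmul a (Csub b c) = Csub (Cmul a b) (Cmul a c).
Proof. cx_ring. Qed.

Lemma csum_ext n f g : (forall j, (j < n)%nat -> f j = g j) -> csum n f = csum n g.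
Proof. induction n as [|n IH]; simpl; intros H; auto. rewrite (H n), IH; auto. Qed.

Lemma csum_add n f g : csum n (fun j => Cadd (f j) (g j)) = Cadd (csum n f) (csum n g).
Proof.
  induction n as [|n IH]; simpl; [cx_ring|]. rewrite IH.
  generalize (csum n f) (csum n g) (f n) (g n); intros; cx_ring.
Qed.

Lemma csum_sub n f g : csum n (fun j => Csub (f j) (g j)) = Csub (csum n f) (csum n g).
Proof.
  induction n as [|n IH]; simpl; [cx_ring|]. rewrite IH.
  generalize (csum n f) (csum n g) (f n) (g n); intros; cx_ring.
Qed.

Lemma csum_scal n a f : csum n (fun j => Cmul a (f j)) = Cmul a (csum n f).
Proof.
  induction n as [|n IH]; simpl; [cx_ring|]. rewrite IH.
  generalize (csum n f) (f n); intros; cx_ring.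
Qed.

Lemma csum_zero n f : (forall j, (j < n)%nat -> f j = C0) -> csum n f = C0.
Proof.
  induction n as [|n IH]; simpl; intros H; auto.
  rewrite IH by (intros; apply H; lia). rewrite H by lia. apply Cadd_C0_l.
Qed.

Lemma csum_delta n a y :
  csum n (fun j => if (a =? j)%nat then y j else C0) = if (a <? n)%nat then y a else C0.
Proof.
  induction n as [|n IH]; simpl; auto. rewrite IH.
  destruct (Nat.eqb_spec a n); destruct (Nat.ltb_spec a n); destruct (Nat.ltb_spec a (S n));
    subst; try lia; auto using Cadd_C0_l, Cadd_C0_r.
Qed.

Lemma csum_pad m j c x :
  csum (m + j) (fun n => Cmul (if (n <? m)%nat then c n else C0) (x n))
  = csum m (fun n => Cmul (c n) (x n)).
Proof.
  induction j as [|j IH].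
  - rewrite Nat.add_0_r. apply csum_ext; intros k Hk. destruct (Nat.ltb_spec k m); [auto|lia].
  - rewrite Nat.add_succ_r; simpl. rewrite IH. destruct (Nat.ltb_spec (m + j) m); [lia|].
    rewrite Cmul_C0_l, Cadd_C0_r; auto.
Qed.

Lemma csum_norm n f : Cnorm2 (csum n f) <= 2 ^ n * rsum n (fun j => Cnorm2 (f j)).
Proof.
  induction n as [|n IH]; simpl; [rewrite Cnorm2_C0; lra|].
  pose proof (Cnorm2_add (csum n f) (f n)).
  assert (0 <= rsum n (fun j => Cnorm2 (f j))) by (apply rsum_nonneg; intros; apply Cnorm2_nonneg).
  assert (1 <= 2 ^ n) by (apply pow_R1_Rle; lra). pose proof (Cnorm2_nonneg (f n)). nra.
Qed.

Definition sqnorm (d N : nat) (v : nat -> nat -> Cx) : R :=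
  rsum d (fun i => rsum N (fun k => Cnorm2 (v i k))).

Lemma sqnorm_nonneg d N v : 0 <= sqnorm d N v.
Proof. apply rsum_nonneg; intros; apply rsum_nonneg; intros; apply Cnorm2_nonneg. Qed.

Lemma sqnorm_add d N v w :
  sqnorm d N (fun i k => Cadd (v i k) (w i k)) <= 2 * sqnorm d N v + 2 * sqnorm d N w.
Proof.
  unfold sqnorm. rewrite <- !rsum_scal, <- rsum_plus. apply rsum_le; intros i _.
  rewrite <- !rsum_scal, <- rsum_plus. apply rsum_le; intros k _. apply Cnorm2_add.
Qed.

Lemma sqnorm_scal d N c v :
  sqnorm d N (fun i k => Cmul c (v i k)) = Cnorm2 c * sqnorm d N v.
Proof.
  unfold sqnorm. rewrite <- rsum_scal. apply rsum_ext; intros i _.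
  rewrite <- rsum_scal. apply rsum_ext; intros k _. apply Cnorm2_mul.
Qed.

Lemma sqnorm_csum d N n (f : nat -> nat -> nat -> Cx) :
  sqnorm d N (fun i k => csum n (fun j => f j i k))
  <= 2 ^ n * rsum n (fun j => sqnorm d N (f j)).
Proof.
  apply Rle_trans with
    (rsum d (fun i => rsum N (fun k => 2 ^ n * rsum n (fun j => Cnorm2 (f j i k))))).
  { apply rsum_le; intros i _; apply rsum_le; intros k _; apply csum_norm. }
  apply Req_le. unfold sqnorm.
  rewrite (rsum_swap n d (fun j i => rsum N (fun k => Cnorm2 (f j i k)))), <- rsum_scal.
  apply rsum_ext; intros i _.
  rewrite (rsum_swap n N (fun j k => Cnorm2 (f j i k))), <- rsum_scal.
  apply rsum_ext; intros k _. rewrite <- rsum_scal. reflexivity.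
Qed.

Definition in_orbit_span (psi v : nat -> nat -> Cx) : Prop :=
  exists m c, forall i k, v i k = csum m (fun n => Cmul (c n) (bshift_pow n psi i k)).

Lemma span_shift psi a : in_orbit_span psi (bshift_pow a psi).
Proof.
  exists (S a), (fun n => if (n =? a)%nat then Cone else C0). intros i k. simpl.
  rewrite csum_zero, Nat.eqb_refl, Cadd_C0_l, Cmul_C1_l; [reflexivity|].
  intros j Hj. destruct (Nat.eqb_spec j a); [lia|]. apply Cmul_C0_l.
Qed.

Lemma span_scal psi s v :
  in_orbit_span psi v -> in_orbit_span psi (fun i k => Cmul s (v i k)).
Proof.
  intros [m [c H]]. exists m, (fun n => Cmul s (c n)). intros i k.
  rewrite H, <- csum_scal. apply csum_ext; intros; apply Cmul_assoc.
Qed.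

Lemma span_add psi v w : in_orbit_span psi v -> in_orbit_span psi w ->
  in_orbit_span psi (fun i k => Cadd (v i k) (w i k)).
Proof.
  intros [m1 [c1 H1]] [m2 [c2 H2]].
  exists (m1 + m2)%nat,
    (fun n => Cadd (if (n <? m1)%nat then c1 n else C0) (if (n <? m2)%nat then c2 n else C0)).
  intros i k. rewrite H1, H2,
    <- (csum_pad m1 m2 c1 (fun n => bshift_pow n psi i k)),
    <- (csum_pad m2 m1 c2 (fun n => bshift_pow n psi i k)),
    (Nat.add_comm m2 m1), <- csum_add.
  apply csum_ext; intros; symmetry; apply Cmul_addl.
Qed.

Lemma span_csum psi n (G : nat -> nat -> nat -> Cx) :
  (forall j, (j < n)%nat -> in_orbit_span psi (G j)) ->
  in_orbit_span psi (fun i k => csum n (fun j => G j i k)).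
Proof.
  induction n as [|n IH]; intros H.
  - exists O, (fun _ => C0). intros; reflexivity.
  - apply span_add; [apply IH; intros; apply H; lia | apply H; lia].
Qed.

(** * A density criterion for cyclicity *)

Definition unit_vec (i k : nat) : nat -> nat -> Cx :=
  fun i' q => if ((i' =? i) && (q =? k))%bool then Cone else C0.

Definition high_part (N0 : nat) (phi : nat -> nat -> Cx) : nat -> nat -> Cx :=
  fun i q => if (q <? N0)%nat then C0 else phi i q.

Lemma high_part_small d phi : inH2d d phi ->
  forall delta, 0 < delta -> exists N0, forall N, sqnorm d N (high_part N0 phi) <= delta.
Proof.
  intros Hphi delta Hdelta.
  set (F := fun N => sqnorm d N phi).
  assert (Fincr : Un_growing F).
  { intros N; unfold F, sqnorm; apply rsum_le; intros i _; simpl.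
    pose proof (Cnorm2_nonneg (phi i N)); lra. }
  assert (Fbound : has_ub F).
  { destruct (rsum_bounded d (fun i N => rsum N (fun k => Cnorm2 (phi i k)))) as [B HB].
    { intros i Hi; exact (Hphi i Hi). }
    exists B; intros x [N ->]; apply HB. }
  destruct (growing_cv F Fincr Fbound) as [l Hl].
  destruct (Hl delta Hdelta) as [N0 HN0]. exists N0. intros N.
  assert (Hinc : F (N0 + N)%nat - F N0 <= delta).
  { pose proof (growing_ineq F l Fincr Hl (N0 + N)%nat) as Hle.
    specialize (HN0 N0 ltac:(lia)). unfold Rdist in HN0. apply Rabs_def2 in HN0. lra. }
  eapply Rle_trans; [|exact Hinc]. unfold F, sqnorm. rewrite <- rsum_minus.
  apply rsum_le; intros i _. eapply Rle_trans; [|apply rsum_tail; intros; apply Cnorm2_nonneg].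
  apply Req_le, rsum_ext; intros q _. unfold high_part. destruct (q <? N0)%nat; auto using Cnorm2_C0.
Qed.

Lemma low_part_expansion d N0 phi i' q : (i' < d)%nat ->
  csum d (fun i => csum N0 (fun k => Cmul (phi i k) (unit_vec i k i' q)))
  = if (q <? N0)%nat then phi i' q else C0.
Proof.
  intros Hi'.
  rewrite (csum_ext d _ (fun i => if (i' =? i)%nat then (if (q <? N0)%nat then phi i q else C0) else C0)).
  - rewrite csum_delta. destruct (Nat.ltb_spec i' d); [reflexivity|lia].
  - intros i _. destruct (Nat.eqb_spec i' i) as [<-|Hne].
    + rewrite <- csum_delta. apply csum_ext; intros k _. unfold unit_vec.
      rewrite Nat.eqb_refl. rewrite (Nat.eqb_sym q k). simpl.
      destruct (k =? q)%nat; [apply Cmul_C1_r|apply Cmul_C0_r].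
    + apply csum_zero; intros k _. unfold unit_vec.
      destruct (Nat.eqb_spec i' i); [lia|]. apply Cmul_C0_r.
Qed.

(* If every unit vector lies in the closure of the orbit span of [psi], then
   [psi] is cyclic: truncate [phi] to finitely many degrees and replace each
   unit vector of the truncation by a close element of the span. *)
Lemma cyclic_of_unit_approx d psi :
  (forall i k eta, (i < d)%nat -> 0 < eta ->
     exists v, in_orbit_span psi v /\ distH2d_sq_le d (unit_vec i k) v eta) ->
  cyclic_bshift d psi.
Proof.
  intros Happ phi Hphi eps Heps.
  destruct (high_part_small d phi Hphi (eps / 4)) as [N0 Hhigh]; [lra|].
  set (K := 2 ^ d * 2 ^ N0 * sqnorm d N0 phi).
  assert (HK : 0 <= K).
  { unfold K. apply Rmult_le_pos; [apply Rmult_le_pos|]; try apply pow_le; try apply sqnorm_nonneg; lra. }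
  set (eta := eps / (4 * (K + 1))).
  assert (Heta : 0 < eta) by (unfold eta; apply Rdiv_lt_0_compat; lra).
  assert (HKeta : K * eta <= eps / 4).
  { replace (eps / 4) with ((K + 1) * eta) by (unfold eta; field; lra). nra. }
  assert (HV : forall i k, {v | (i < d)%nat ->
            in_orbit_span psi v /\ distH2d_sq_le d (unit_vec i k) v eta}).
  { intros i k. apply constructive_indefinite_description.
    destruct (Nat.lt_ge_cases i d) as [Hi|Hi].
    - destruct (Happ i k eta Hi Heta) as [v Hv]. exists v; auto.
    - exists phi; intros; lia. }
  set (V := fun i k => proj1_sig (HV i k)).
  assert (HVspec : forall i k, (i < d)%nat ->
            in_orbit_span psi (V i k) /\ distH2d_sq_le d (unit_vec i k) (V i k) eta).
  { intros i k; exact (proj2_sig (HV i k)). }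
  set (Q := fun i' q => csum d (fun i => csum N0 (fun k => Cmul (phi i k) (V i k i' q)))).
  set (err := fun i' q => csum d (fun i => csum N0 (fun k =>
                Cmul (phi i k) (Csub (unit_vec i k i' q) (V i k i' q))))).
  assert (HQ : in_orbit_span psi Q).
  { apply span_csum; intros i Hi. apply span_csum; intros k _.
    apply span_scal, (HVspec i k Hi). }
  destruct HQ as [m [c Hc]]. exists m, c. intros N.
  change (sqnorm d N (fun i' q => Csub (phi i' q)
            (csum m (fun n => Cmul (c n) (bshift_pow n psi i' q)))) <= eps).
  assert (Hsplit : forall i' q, (i' < d)%nat ->
            Csub (phi i' q) (Q i' q) = Cadd (high_part N0 phi i' q) (err i' q)).
  { intros i' q Hi'. unfold err. 
    rewrite (csum_ext d _ (fun i => Csub (csum N0 (fun k => Cmul (phi i k) (unit_vec i k i' q)))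
                                        (csum N0 (fun k => Cmul (phi i k) (V i k i' q))))).
    2:{ intros i _. rewrite <- csum_sub. apply csum_ext; intros; apply Cmul_subr. }
    rewrite csum_sub, low_part_expansion by exact Hi'. fold (Q i' q). unfold high_part.
    destruct (q <? N0)%nat; generalize (phi i' q) (Q i' q); intros; cx_ring. }
  assert (Herr : sqnorm d N err <= K * eta).
  { eapply Rle_trans; [apply sqnorm_csum|].
    replace (K * eta) with (2 ^ d * rsum d (fun i => 2 ^ N0 * rsum N0 (fun k =>
                              eta * Cnorm2 (phi i k))))
      by (rewrite (rsum_ext d _ (fun i => 2 ^ N0 * eta * rsum N0 (fun k => Cnorm2 (phi i k))))
            by (intros; rewrite rsum_scal; ring);
          rewrite rsum_scal; unfold K, sqnorm; ring).
    apply Rmult_le_compat_l; [apply pow_le; lra|]. apply rsum_le; intros i Hi.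
    eapply Rle_trans; [apply sqnorm_csum|].
    apply Rmult_le_compat_l; [apply pow_le; lra|]. apply rsum_le; intros k _.
    rewrite sqnorm_scal, Rmult_comm. apply Rmult_le_compat_r; [apply Cnorm2_nonneg|].
    apply (HVspec i k Hi). }
  unfold sqnorm at 1. rewrite (rsum_ext d _ (fun i' => rsum N (fun q =>
      Cnorm2 (Cadd (high_part N0 phi i' q) (err i' q))))).
  2:{ intros i' Hi'. apply rsum_ext; intros q _. rewrite <- Hc. f_equal. apply Hsplit, Hi'. }
  fold (sqnorm d N (fun i' q => Cadd (high_part N0 phi i' q) (err i' q))).
  pose proof (sqnorm_add d N (high_part N0 phi) err). specialize (Hhigh N). lra.
Qed.

(** * The cyclic vector *)

Section Construction.

Variable d : nat.
Hypothesis d_pos : (1 <= d)%nat.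
Variable Lam : nat -> nat -> Prop.
Variable E : nat -> nat -> nat.
Hypothesis E_incr : forall i, (i < d)%nat -> forall j, (E i j < E i (S j))%nat.
Hypothesis E_in : forall i, (i < d)%nat -> forall j, Lam i (E i j).

Lemma mod_d_lt t : (t mod d < d)%nat.
Proof. apply Nat.mod_upper_bound; lia. Qed.

Fixpoint leader (t : nat) : nat :=
  E (t mod d) (match t with O => O | S s => 2 * leader s + s + 5 end).

Lemma leader_in t : Lam (t mod d) (leader t).
Proof. destruct t; apply E_in, mod_d_lt. Qed.

Lemma leader_step s : (2 * leader s + s + 5 <= leader (S s))%nat.
Proof.
  assert (Hge : forall f : nat -> nat, (forall j, (f j < f (S j))%nat) -> forall j, (j <= f j)%nat).
  { intros f Hf j; induction j; [lia|]. specialize (Hf j); lia. }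
  apply (Hge _ (E_incr _ (mod_d_lt (S s)))).
Qed.

Lemma leader_ge t : (3 * t <= leader t)%nat.
Proof. induction t as [|t IH]; [lia|]. pose proof (leader_step t); lia. Qed.

Lemma leader_gap t' t : (t' < t)%nat -> (leader t' + t + 4 <= leader t)%nat.
Proof.
  induction t as [|t IH]; intros Ht; [lia|]. pose proof (leader_step t).
  destruct (Nat.eq_dec t' t); [subst; lia|]. specialize (IH ltac:(lia)); lia.
Qed.

Lemma leader_after t t' : t' <> t -> (leader t <= leader t' + t)%nat ->
  (2 * leader t + t + 5 <= leader t')%nat.
Proof.
  intros Hne Hle. destruct (Nat.lt_total t' t) as [Hlt|[Heq|Hgt]].
  - pose proof (leader_gap t' t Hlt); lia.
  - contradiction.
  - pose proof (leader_step t).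
    destruct (Nat.eq_dec (S t) t') as [<-|Hne']; [lia|].
    pose proof (leader_gap (S t) t' ltac:(lia)); lia.
Qed.

Definition is_leader (i p : nat) : Prop := exists t, leader t = p /\ t mod d = i.

Definition psi_lac (i p : nat) : Cx :=
  if excluded_middle_informative (is_leader i p) then mkC (geo p) 0
  else if excluded_middle_informative (Lam i p) then mkC (geo (2 * p)) 0
  else C0.

Lemma psi_coef_bound i p : Cnorm2 (psi_lac i p) <= geo p.
Proof.
  unfold psi_lac. pose proof (geo_pos p); pose proof (geo_le1 p).
  destruct (excluded_middle_informative _); [rewrite Cnorm2_real; nra|].
  destruct (excluded_middle_informative _); [|rewrite Cnorm2_C0; lra].
  rewrite Cnorm2_real. pose proof (geo_anti (2 * p) p (Nat.le_add_r p (p + 0))).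
  pose proof (geo_pos (2 * p)); pose proof (geo_le1 (2 * p)). nra.
Qed.

Lemma psi_in_H2 : inH2d d psi_lac.
Proof.
  intros i _. exists 2. intros N. eapply Rle_trans; [|apply (rsum_geo N)].
  apply rsum_le; intros; apply psi_coef_bound.
Qed.

Lemma psi_spectrum i : (i < d)%nat -> forall k, spectrum (psi_lac i) k <-> Lam i k.
Proof.
  intros Hi k. unfold spectrum, psi_lac.
  destruct (excluded_middle_informative _) as [[t [<- <-]]|Hnl].
  - split; [intros _; apply leader_in|]. intros _ Heq. injection Heq as Hre.
    pose proof (geo_pos (leader t)); lra.
  - destruct (excluded_middle_informative _) as [HL|HL].
    + split; [auto|]. intros _ Heq. injection Heq as Hre.
      pose proof (geo_pos (k + (k + 0))); lra.
    + split; intros; contradiction.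
Qed.

Lemma psi_off_leader t i p : (leader t <= p + t)%nat -> ~ (i = t mod d /\ p = leader t) ->
  Cnorm2 (psi_lac i p) <= geo (p + leader t + 2 * t).
Proof.
  intros Hp Hnot. pose proof (leader_ge t). unfold psi_lac.
  destruct (excluded_middle_informative _) as [[t' [Ht' Hi]]|Hnl].
  - assert (t' <> t) by (intros ->; apply Hnot; auto).
    pose proof (leader_after t t' ltac:(assumption) ltac:(lia)).
    rewrite Cnorm2_real, <- geo_add. apply geo_anti. lia.
  - destruct (excluded_middle_informative _).
    + rewrite Cnorm2_real, <- geo_add. apply geo_anti. lia.
    + rewrite Cnorm2_C0. apply Rlt_le, geo_pos.
Qed.

Lemma psi_at_leader t : psi_lac (t mod d) (leader t) = mkC (geo (leader t)) 0.
Proof.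
  unfold psi_lac. destruct (excluded_middle_informative _) as [|Hnl]; [reflexivity|].
  exfalso; apply Hnl; exists t; auto.
Qed.

Lemma psi_unit_approx t k i' q : (k <= t)%nat ->
  Cnorm2 (Csub (unit_vec (t mod d) k i' q)
                (Cmul (mkC (/ geo (leader t)) 0) (bshift_pow (leader t - k) psi_lac i' q)))
  <= geo t * geo q.
Proof.
  intros Hkt. pose proof (leader_ge t). set (L := leader t).
  assert (HL : 0 < geo L) by apply geo_pos.
  unfold bshift_pow, unit_vec.
  destruct ((i' =? t mod d) && (q =? k))%bool eqn:Hdiag.
  - apply Bool.andb_true_iff in Hdiag as [Hi Hq].
    apply Nat.eqb_eq in Hi as ->; apply Nat.eqb_eq in Hq as ->.
    replace (k + (L - k))%nat with L by lia. unfold L; rewrite psi_at_leader; fold L.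
    unfold Csub, Cmul, Cone, Cnorm2; simpl.
    replace (1 - (/ geo L * geo L - 0 * 0)) with 0 by (field; lra).
    replace (0 - (/ geo L * 0 + 0 * geo L)) with 0 by ring.
    pose proof (geo_pos t); pose proof (geo_pos k); nra.
  - assert (Hnot : ~ (i' = t mod d /\ (q + (L - k))%nat = L)).
    { intros [Hi Hp]. rewrite <- Nat.eqb_eq in Hi. replace q with k in Hdiag by lia.
      rewrite Hi, Nat.eqb_refl in Hdiag. discriminate. }
    pose proof (psi_off_leader t i' (q + (L - k)) ltac:(fold L; lia) Hnot) as Hbound. fold L in Hbound.
    rewrite Cnorm2_opp, Cnorm2_mul, Cnorm2_real.
    replace (q + (L - k) + L + 2 * t)%nat with (L + L + (t + q + (t - k)))%nat in Hbound by lia.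
    rewrite !geo_add in Hbound. pose proof (geo_pos t); pose proof (geo_pos q).
    pose proof (geo_pos (t - k)); pose proof (geo_le1 (t - k)).
    apply Rle_trans with (/ geo L * / geo L * (geo L * geo L * (geo t * geo q * geo (t - k)))).
    + apply Rmult_le_compat_l; [|exact Hbound].
      assert (0 < / geo L) by (apply Rinv_0_lt_compat; lra). nra.
    + replace (/ geo L * / geo L * (geo L * geo L * (geo t * geo q * geo (t - k))))
        with (geo t * geo q * geo (t - k)) by (field; lra).
      rewrite <- (Rmult_1_r (geo t * geo q)) at 2. apply Rmult_le_compat_l; nra.
Qed.

(* Every unit vector lies in the closure of the orbit span of [psi]: use the
   approximation above along leaders [t] of the right coordinate with [t]
   large. *)
Lemma psi_units_in_closure i k eta : (i < d)%nat -> 0 < eta ->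
  exists v, in_orbit_span psi_lac v /\ distH2d_sq_le d (unit_vec i k) v eta.
Proof.
  intros Hi Heta. pose proof (lt_0_INR d ltac:(lia)) as Hdpos.
  destruct (geo_small (eta / (2 * INR d))) as [T HT].
  { apply Rdiv_lt_0_compat; lra. }
  set (t := ((T + k) * d + i)%nat).
  assert (Htmod : (t mod d = i)%nat).
  { unfold t. rewrite Nat.add_comm, Nat.Div0.mod_add. apply Nat.mod_small, Hi. }
  assert (HtT : (T + k <= t)%nat) by (unfold t; nia).
  exists (fun i' q => Cmul (mkC (/ geo (leader t)) 0) (bshift_pow (leader t - k) psi_lac i' q)).
  split; [apply span_scal, span_shift|]. intros N.
  apply Rle_trans with (rsum d (fun _ => rsum N (fun q => geo t * geo q))).
  { apply rsum_le; intros i' _; apply rsum_le; intros q _.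
    rewrite <- Htmod. apply psi_unit_approx. lia. }
  rewrite rsum_const, rsum_scal. specialize (HT t ltac:(lia)).
  pose proof (rsum_geo N); pose proof (geo_pos t).
  apply Rle_trans with (INR d * (eta / (2 * INR d) * 2)).
  { apply Rmult_le_compat_l; [lra|]. apply Rmult_le_compat; try lra.
    apply rsum_nonneg; intros; apply Rlt_le, geo_pos. }
  apply Req_le; field; lra.
Qed.

Lemma psi_cyclic : cyclic_bshift d psi_lac.
Proof. apply cyclic_of_unit_approx, psi_units_in_closure. Qed.

End Construction.

Lemma enumerations_exist d (Lam : nat -> nat -> Prop) :
  (forall i, (i < d)%nat -> infinite_lacunary (Lam i)) ->
  exists E : nat -> nat -> nat,
    (forall i, (i < d)%nat -> forall j, (E i j < E i (S j))%nat) /\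
    (forall i, (i < d)%nat -> forall j, Lam i (E i j)).
Proof.
  intros HL.
  assert (Henum : forall i, {f : nat -> nat | (i < d)%nat ->
            (forall j, (f j < f (S j))%nat) /\ (forall j, Lam i (f j))}).
  { intros i. apply constructive_indefinite_description.
    destruct (Nat.lt_ge_cases i d) as [Hi|Hi].
    - destruct (HL i Hi) as [n [Hinc [Hmem _]]]. exists n. intros _.
      split; [exact Hinc|]. intros j; apply Hmem; exists j; reflexivity.
    - exists (fun j => j). intros; lia. }
  exists (fun i => proj1_sig (Henum i)).
  split; intros i Hi; apply (proj2_sig (Henum i) Hi).
Qed.

Theorem mainTheorem11 (d : nat) (Lam : nat -> nat -> Prop) :
  (1 <= d)%nat ->
  (forall i, (i < d)%nat -> infinite_lacunary (Lam i)) ->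
  exists psi : nat -> nat -> Cx,
    inH2d d psi /\ cyclic_bshift d psi /\
    forall i, (i < d)%nat -> forall k, spectrum (psi i) k <-> Lam i k.
Proof.
  intros Hd HL.
  destruct (enumerations_exist d Lam HL) as [E [E_incr E_in]].
  exists (psi_lac d Lam E). split; [|split].
  - apply psi_in_H2.
  - apply psi_cyclic; assumption.
  - apply psi_spectrum; assumption.
Qed.
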